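(* Let $\lambda\in\mathcal O$ be a nonzero limit ordinal and $\mathcal A,\mathcal B:\mathcal O\to\mathrm{SAT}$. Then $$\limsup_{\alpha\to\lambda}\big(\mathcal A(\alpha)\Rightarrow\mathcal B(\alpha)\big)\subseteq\Big(\liminf_{\lambda}\mathcal A\Big)\Rightarrow\Big(\limsup_{\lambda}\mathcal B\Big).$$
   Context: $\mathcal O$ is the set of ordinals $\le\top_{\mathsf{ord}}$ for a fixed ordinal $\top_{\mathsf{ord}}$ ($=\beth_\omega$). For $f:\mathcal O\to\mathfrak L$ into a complete lattice and a nonzero limit $\lambda$: $\liminf_{\alpha\to\lambda}f(\alpha)=\sup_{\alpha_0<\lambda}\inf_{\alpha_0\le\alpha<\lambda}f(\alpha)$, $\limsup_{\alpha\to\lambda}f(\alpha)=\inf_{\alpha_0<\lambda}\sup_{\alpha_0\le\alpha<\lambda}f(\alpha)$. Terms of an untyped lambda calculus with constants: $r,s,t::=c\mid x\mid\lambda x\,t\mid r\,s$ (constants $\langle\rangle,\mathsf{pair},\mathsf{fst},\mathsf{snd},\mathsf{inl},\mathsf{inr},\mathsf{case},\mathsf{in},\mathsf{out},\mathsf{fix}^\mu_n,\mathsf{fix}^\nu_n$). $\mathrm{SAT}$ denotes the set of saturated sets of terms (sets of strongly normalizing terms containing all neutral terms and closed under weak-head expansion); it is a complete lattice ordered by $\subseteq$ in which infima and suprema of nonempty families are intersection and union; $\liminf,\limsup$ are computed in it. For $\mathcal A,\mathcal B\in\mathrm{SAT}$, the saturated set $\mathcal A\Rightarrow\mathcal B:=\bigcap_{s\in\mathcal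 A}(\_\,s)^{-1}\mathcal B=\{r\mid r\,s\in\mathcal B\text{ for all }s\in\mathcal A\}$ (with $\bigcap_{s\in\emptyset}$ read as the set of all strongly normalizing terms). *)

From Stdlib Require Import Arith List.
Import ListNotations.

Inductive const : Type :=
| CUnit | CPair | CFst | CSnd | CInl | CInr | CCase | CIn | COut
| CFixMu (n : nat) | CFixNu (n : nat).

Inductive tm : Type :=
| C (c : const)
| Var (x : nat)
| Lam (t : tm)
| App (r s : tm).

Fixpoint lift (d c : nat) (t : tm) : tm :=
  match t with
  | C k => C k
  | Var x => if x <? c then Var x else Var (x + d)
  | Lam t => Lam (lift d (S c) t)
  | App r s => App (lift d c r) (lift d c s)
  end.

Fixpoint subst (k : nat) (s : tm) (t : tm) : tm :=
  match t with
  | C c => C c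
  | Var x => if x <? k then Var x
             else if x =? k then lift k 0 s
             else Var (x - 1)
  | Lam t => Lam (subst (S k) s t)
  | App r u => App (subst k s r) (subst k s u)
  end.

Definition apps (h : tm) (ts : list tm) : tm := fold_left App ts h.

Inductive contr : tm -> tm -> Prop :=
| c_beta t s : contr (App (Lam t) s) (subst 0 s t)
| c_fst r s : contr (App (C CFst) (App (App (C CPair) r) s)) r
| c_snd r s : contr (App (C CSnd) (App (App (C CPair) r) s)) s
| c_case_inl r s t :
    contr (App (App (App (C CCase) (App (C CInl) r)) s) t) (App s r)
| c_case_inr r s t :
    contr (App (App (App (C CCase) (App (C CInr) r)) s) t) (App t r)
| c_out r : contr (App (C COut) (App (C CIn) r)) r
| c_fixmu n s ts r : length ts = n ->
    contr (App (apps (C (CFixMu n)) (s :: ts)) (App (C CIn) r))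
          (App (apps s (App (C (CFixMu n)) s :: ts)) (App (C CIn) r))
| c_fixnu n s ts : length ts = n ->
    contr (App (C COut) (apps (C (CFixNu n)) (s :: ts)))
          (App (C COut) (apps s (App (C (CFixNu n)) s :: ts))).

Inductive step : tm -> tm -> Prop :=
| st_contr r r' : contr r r' -> step r r'
| st_lam t t' : step t t' -> step (Lam t) (Lam t')
| st_appl r r' s : step r r' -> step (App r s) (App r' s)
| st_appr r s s' : step s s' -> step (App r s) (App r s').

Inductive SN (t : tm) : Prop :=
| SN_intro : (forall t', step t t' -> SN t') -> SN t.

(** eliminations whose principal argument is their first argument *)
Definition is_elim (c : const) : Prop :=
  c = CFst \/ c = CSnd \/ c = CCase \/ c = COut.

(** weak-head reduction: contraction inside an evaluation context
    E ::= [] | E s | fst E | snd E | case E | out E | fix^mu_n s t1..tn E *)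
Inductive whstep : tm -> tm -> Prop :=
| wh_contr r r' : contr r r' -> whstep r r'
| wh_appl r r' s : whstep r r' -> whstep (App r s) (App r' s)
| wh_elim c r r' : is_elim c -> whstep r r' -> whstep (App (C c) r) (App (C c) r')
| wh_fix n s ts r r' : length ts = n -> whstep r r' ->
    whstep (App (apps (C (CFixMu n)) (s :: ts)) r)
           (App (apps (C (CFixMu n)) (s :: ts)) r').

(** neutral terms: a variable in an evaluation context *)
Inductive neutral : tm -> Prop :=
| ne_var x : neutral (Var x)
| ne_app r s : neutral r -> neutral (App r s)
| ne_elim c r : is_elim c -> neutral r -> neutral (App (C c) r)
| ne_fix n s ts r : length ts = n -> neutral r ->
    neutral (App (apps (C (CFixMu n)) (s :: ts)) r).

Definition tset := tm -> Prop.

Record saturated (A : tset) : Prop := {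
  sat_SN : forall t, A t -> SN t;
  sat_neutral : forall t, neutral t -> SN t -> A t;
  sat_whexp : forall t t', whstep t t' -> A t' -> SN t -> A t
}.

(** A => B := intersection over s in A of (_ s)^{-1} B,
    the empty intersection being the set of all SN terms *)
Definition arrow (A B : tset) : tset :=
  fun r => (forall s, A s -> B (App r s)) /\ ((~ exists s, A s) -> SN r).

(** * Ordinals: an arbitrary well-ordered type *)
Definition is_wellorder {O : Type} (lt : O -> O -> Prop) : Prop :=
  (forall a, ~ lt a a) /\
  (forall a b c, lt a b -> lt b c -> lt a c) /\
  (forall a b, lt a b \/ a = b \/ lt b a) /\
  well_founded lt.

Definition nonzero_limit {O : Type} (lt : O -> O -> Prop) (lam : O) : Prop :=
  (exists a, lt a lam) /\ (forall a, lt a lam -> exists b, lt a b /\ lt b lam).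

Definition le_of {O : Type} (lt : O -> O -> Prop) (a b : O) : Prop :=
  a = b \/ lt a b.

(** liminf / limsup in SAT, where infima / suprema of the (nonempty)
    families involved are intersections / unions *)
Definition liminf {O : Type} (lt : O -> O -> Prop) (lam : O) (f : O -> tset) : tset :=
  fun t => exists a0, lt a0 lam /\
    forall a, le_of lt a0 a -> lt a lam -> f a t.

Definition limsup {O : Type} (lt : O -> O -> Prop) (lam : O) (f : O -> tset) : tset :=
  fun t => forall a0, lt a0 lam ->
    exists a, le_of lt a0 a /\ lt a lam /\ f a t.


(* The application part is the usual "eventually and frequently implies
   frequently": a witness for the limsup of [A a => B a] chosen beyond the
   point from which [s] stays in [A] gives [App r s] in [B a].  The SN part
   holds because the liminf of saturated sets contains every variable, so it
   is never empty. *)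

Section LimitsAlongWellOrder.

Variables (O : Type) (lt : O -> O -> Prop).
Hypothesis lt_trans : forall a b c, lt a b -> lt b c -> lt a c.
Hypothesis lt_trichotomy : forall a b, lt a b \/ a = b \/ lt b a.

Lemma le_of_trans a b c : le_of lt a b -> le_of lt b c -> le_of lt a c.
Proof.
  intros [<- | Hab] [<- | Hbc]; unfold le_of; eauto.
Qed.

Lemma le_of_max a b : exists c, le_of lt a c /\ le_of lt b c /\ (c = a \/ c = b).
Proof.
  unfold le_of.
  destruct (lt_trichotomy a b) as [H | [<- | H]].
  - exists b; auto.
  - exists a; auto.
  - exists a; auto.
Qed.

Lemma frequently_and_eventually (lam : O) (P Q : O -> Prop) :
  (exists a0, lt a0 lam /\ forall a, le_of lt a0 a -> lt a lam -> P a) ->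
  (forall b0, lt b0 lam -> exists a, le_of lt b0 a /\ lt a lam /\ Q a) ->
  forall b0, lt b0 lam -> exists a, le_of lt b0 a /\ lt a lam /\ P a /\ Q a.
Proof.
  intros [a0 [Ha0 HP]] HQ b0 Hb0.
  destruct (le_of_max a0 b0) as [c [Hac [Hbc Hc]]].
  assert (Hclam : lt c lam) by (destruct Hc as [-> | ->]; assumption).
  destruct (HQ c Hclam) as [a [Hca [Halam Qa]]].
  exists a; repeat split; eauto using le_of_trans.
Qed.

Lemma limsup_arrow_app (lam : O) (A B : O -> tset) r s :
  limsup lt lam (fun a => arrow (A a) (B a)) r ->
  liminf lt lam A s -> limsup lt lam B (App r s).
Proof.
  intros Hr Hs b0 Hb0.
  destruct (frequently_and_eventually lam _ _ Hs Hr b0 Hb0)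
    as [a [Hba [Halam [HAs [HAB _]]]]].
  exists a; auto.
Qed.

End LimitsAlongWellOrder.

Lemma SN_var x : SN (Var x).
Proof.
  constructor; intros t' Hstep.
  inversion Hstep as [r r' Hcontr | | |]; subst; inversion Hcontr.
Qed.

Lemma saturated_var (A : tset) x : saturated A -> A (Var x).
Proof.
  intros HA; apply (sat_neutral _ HA); [constructor | apply SN_var].
Qed.

Lemma liminf_saturated_var (O : Type) (lt : O -> O -> Prop) (lam : O)
  (A : O -> tset) x :
  (exists a, lt a lam) -> (forall a, saturated (A a)) ->
  liminf lt lam A (Var x).
Proof.
  intros [a0 Ha0] HA; exists a0; split; [exact Ha0 |].
  intros a _ _; apply saturated_var, HA.
Qed.

Theorem theorem4p7 (O : Type) (lt : O -> O -> Prop) (Hwo : is_wellorder lt)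
  (lam : O) (Hlam : nonzero_limit lt lam) (A B : O -> tset)
  (HA : forall a, saturated (A a)) (HB : forall a, saturated (B a)) :
  forall r, limsup lt lam (fun a => arrow (A a) (B a)) r ->
    arrow (liminf lt lam A) (limsup lt lam B) r.
Proof.
  destruct Hwo as [_ [Htrans [Htri _]]].
  intros r Hr; split.
  - intros s Hs; exact (limsup_arrow_app O lt Htrans Htri lam A B r s Hr Hs).
  - intros Hempty; exfalso; apply Hempty.
    exists (Var 0); apply liminf_saturated_var; [apply Hlam | exact HA].
Qed.
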